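(* Let $\phi:\mathbb{N}^+\to\mathbb{R}$ be nondecreasing with $\phi(i)>1$ for all $i$, let $m,k\in\mathbb{N}^+$, and let $A>0$ satisfy $A-\ln A-\ln 2-1>0$. Define $$F^0_{mk}:=\bigcup J_{(a_1,\dots,a_{m+k})},$$ the union over all $(a_1,\dots,a_{m+k})\in(\mathbb{N}^+)^{m+k}$ with $a_{m+i}<\phi(m+i)$ for $i=1,\dots,k$ (no constraint on $a_1,\dots,a_m$), and $$G^0_k:=\bigcup J_{(a_1,\dots,a_k)},$$ the union over all $(a_1,\dots,a_k)\in(\mathbb{N}^+)^k$ with $a_1a_2\cdots a_k\ge e^{Ak}$. Then $|\overline{F^0_{mk}}|=|F^0_{mk}|$ and $|\overline{G^0_k}|=|G^0_k|$, where $\overline{S}$ denotes closure and $|S|$ Lebesgue measure.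
   Context: For a tuple $(a_1,\dots,a_i)$ of positive integers, define $p_{-1}=1$, $p_0=0$, $q_{-1}=0$, $q_0=1$, and $p_j=a_jp_{j-1}+p_{j-2}$, $q_j=a_jq_{j-1}+q_{j-2}$ for $j=1,\dots,i$. Then $J_{(a_1,\dots,a_i)}$ is the open interval with endpoints $p_i/q_i$ and $(p_i+p_{i-1})/(q_i+q_{i-1})$; equivalently, it is the set of numbers $[0;a_1,\dots,a_i,r]=\frac{r p_i+p_{i-1}}{r q_i+q_{i-1}}$ for $r\in(1,\infty)$, i.e. the numbers in $(0,1)$ whose continued fraction begins $[0;a_1,\dots,a_i,\dots]$ followed by further elements. *)

From HB Require Import structures.
From mathcomp Require Import all_boot all_order all_algebra.
From mathcomp Require Import all_classical all_reals all_analysis.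
Set Implicit Arguments. Unset Strict Implicit. Unset Printing Implicit Defensive.
Import Order.TTheory GRing.Theory Num.Theory.
Local Open Scope classical_set_scope.
Local Open Scope ring_scope.

(* Continuant recursion: for a = (a_1,...,a_i), returns
   (p_i, p_{i-1}, q_i, q_{i-1}) starting from p_0=0,p_{-1}=1,q_0=1,q_{-1}=0. *)
Definition cf_pq (a : seq nat) : nat * nat * nat * nat :=
  foldl (fun (s : nat * nat * nat * nat) (aj : nat) =>
           let: (p, p', q, q') := s in
           (aj * p + p', p, aj * q + q', q)%N) (0, 1, 1, 0)%N a.

Definition Jcyl (R : realType) (a : seq nat) : set R :=
  let: (p, p', q, q') := cf_pq a in
  let e1 : R := p%:R / q%:R in
  let e2 : R := (p + p')%:R / (q + q')%:R in
  [set x : R | Num.min e1 e2 < x < Num.max e1 e2].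

(* F^0_{mk}: union over (a_1..a_{m+k}) in (N^+)^{m+k} with
   a_{m+i} < phi(m+i) for i = 1..k.  Sequences are 0-indexed: a_j = nth 0 a (j-1). *)
Definition F0 (R : realType) (phi : nat -> R) (m k : nat) : set R :=
  \bigcup_(a in [set a : seq nat | size a = (m + k)%N /\ all (fun x => 0 < x)%N a /\
        (forall i : nat, (1 <= i <= k)%N -> (nth 0%N a (m + i - 1))%:R < phi (m + i)%N)])
    @Jcyl R a.

Definition G0 (R : realType) (A : R) (k : nat) : set R :=
  \bigcup_(a in [set a : seq nat | size a = k /\ all (fun x => 0 < x)%N a /\
        expR (A * k%:R) <= (\prod_(x <- a) x)%N%:R])
    @Jcyl R a.

From HB Require Import structures.
From mathcomp Require Import all_boot all_order all_algebra.
From mathcomp Require Import all_classical all_reals all_analysis.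
Import Order.TTheory GRing.Theory Num.Theory.
Import numFieldNormedType.Exports.
Local Open Scope classical_set_scope.
Local Open Scope ring_scope.
From mathcomp Require Import ring lra measurable_realfun.
Set Implicit Arguments. Unset Strict Implicit.

(* Write x = [0; a_1, ..., a_n, t] with tail t.  Then x lies in J_(a_1..a_n)
   iff t > 1, and in J_(a_1..a_n, c) iff c < t < c + 1.  Hence cylinders of a
   fixed rank n are pairwise disjoint open intervals, and every x in (0, 1)
   that is not a ratio of naturals lies in one of them.  A point of the closure
   of a union S of rank-n cylinders that is not such a ratio therefore lies in
   a rank-n cylinder meeting S, which must be one of the cylinders of S.  So
   the closure only adds countably many points, a Lebesgue null set. *)

Section Between.
Variable R : realFieldType.

Lemma between_mul_lt0 (e1 e2 x : R) : e1 <= e2 ->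
  (e1 < x < e2) = ((e1 - x) * (e2 - x) < 0).
Proof.
move=> le12; apply/idP/idP => [/andP[lt1 lt2]|H].
  by rewrite nmulr_rlt0 ?subr_lt0 // subr_gt0.
apply/andP; split.
- rewrite -subr_lt0; apply: contraTT H; rewrite -!leNgt => H1.
  by rewrite mulr_ge0 //; lra.
- rewrite -subr_gt0; apply: contraTT H; rewrite -!leNgt => H1.
  by rewrite mulr_le0 //; lra.
Qed.

Lemma minmax_mul_lt0 (e1 e2 x : R) :
  (Num.min e1 e2 < x < Num.max e1 e2) = ((e1 - x) * (e2 - x) < 0).
Proof.
rewrite /Num.min /Num.max; case: (ltP e1 e2) => le12.
- by rewrite between_mul_lt0 // ltW.
- by rewrite between_mul_lt0 // mulrC.
Qed.
End Between.

Section CylinderForm.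
Variable R : realFieldType.
Implicit Types u v c : R.

Definition cyl_form (w : R * R) : R := w.1 * (w.1 + w.2).

Lemma cyl_form_lt0_neq0 (w : R * R) : cyl_form w < 0 -> w.1 != 0 /\ w.2 != 0.
Proof.
case: w => u v; rewrite /cyl_form /= => H; split.
  by apply: contraTneq H => ->; rewrite mul0r ltxx.
by apply: contraTneq H => ->; rewrite addr0 -leNgt -expr2 sqr_ge0.
Qed.

Lemma cyl_formE u v : u != 0 -> (cyl_form (u, v) < 0) = (1 < - v / u).
Proof.
move=> u0; have -> : cyl_form (u, v) = u ^+ 2 * (1 - - v / u).
  by rewrite /cyl_form /=; field.
by rewrite pmulr_rlt0 ?exprn_even_gt0 // subr_lt0.
Qed.

Lemma cyl_form_stepE u v c : u != 0 ->
  (cyl_form (c * u + v, u) < 0) = (c < - v / u < c + 1).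
Proof.
move=> u0; rewrite /cyl_form /= between_mul_lt0; last lra.
have -> : (c * u + v) * ((c * u + v) + u) =
    u ^+ 2 * ((c - - v / u) * (c + 1 - - v / u)) by field.
by rewrite pmulr_rlt0 // exprn_even_gt0.
Qed.

Lemma cyl_form_step_lt0 u v (c : nat) : (1 <= c)%N ->
  cyl_form (c%:R * u + v, u) < 0 -> cyl_form (u, v) < 0.
Proof.
move=> c1 H; have [_ /= u0] := cyl_form_lt0_neq0 H.
move: H; rewrite cyl_form_stepE // cyl_formE // => /andP[lt_ct _].
by rewrite (le_lt_trans _ lt_ct) // ler1n.
Qed.

Lemma cyl_form_step_inj u v (c d : nat) :
  cyl_form (c%:R * u + v, u) < 0 -> cyl_form (d%:R * u + v, u) < 0 -> c = d.
Proof.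
move=> H; have [_ /= u0] := cyl_form_lt0_neq0 H.
move: H; rewrite !cyl_form_stepE // => /andP[h1 h2] /andP[h3 h4].
have : (c%:R : R) < d%:R + 1 by lra.
have : (d%:R : R) < c%:R + 1 by lra.
by rewrite !natr1 !ltr_nat !ltnS => ? ?; apply/eqP; rewrite eqn_leq; apply/andP.
Qed.
End CylinderForm.

(* The next partial quotient is c = floor (- v / u); [nz] rules out an integral tail. *)
Lemma cyl_form_step_exists (R : archiRealFieldType) (u v : R) :
  cyl_form (u, v) < 0 -> (forall c : nat, (1 <= c)%N -> c%:R * u + v != 0) ->
  exists2 c : nat, (1 <= c)%N & cyl_form (c%:R * u + v, u) < 0.
Proof.
move=> H nz; have [/= u0 _] := cyl_form_lt0_neq0 H.
move: H; rewrite cyl_formE // => t1; set t := - v / u in t1 *.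
have c1 : (1 <= Num.truncn t)%N by rewrite truncn_gt0 ltW.
have /andP[le_ct lt_tc] := truncn_itv (ltW (lt_trans ltr01 t1)).
exists (Num.truncn t) => //; rewrite cyl_form_stepE // natr1 lt_tc andbT.
rewrite lt_neqAle le_ct andbT; apply: contra (nz _ c1) => /eqP ->.
by apply/eqP; rewrite /t; field.
Qed.

Lemma cf_pq_rcons a c : cf_pq (rcons a c) =
  let: (p, p', q, q') := cf_pq a in (c * p + p', p, c * q + q', q)%N.
Proof. by rewrite /cf_pq foldl_rcons; case: foldl => [[[]]]. Qed.

Definition positive_seq (a : seq nat) := all (fun x => 0 < x)%N a.

Lemma cf_q_gt0 a : positive_seq a -> (0 < (cf_pq a).1.2)%N.
Proof.
elim/last_ind: a => [//|a c IH].
rewrite /positive_seq all_rcons => /andP[c0 /IH]; rewrite cf_pq_rcons.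
case: (cf_pq a) => [[[p p'] q] q'] /= q0.
by rewrite (leq_trans q0) // (leq_trans _ (leq_addr _ _)) // leq_pmull.
Qed.

Section Cylinders.
Variable R : realType.
Implicit Types (a b : seq nat) (x y : R).

(* (u, v) = (x q_n - p_n, x q_(n-1) - p_(n-1)); the tail t with
   x = [0; a_1, ..., a_n, t] is - v / u. *)
Definition cf_res a x : R * R :=
  let: (p, p', q, q') := cf_pq a in (x * q%:R - p%:R, x * q'%:R - p'%:R).

Definition nat_fracs : set R := (fun pq : nat * nat => pq.1%:R / pq.2%:R) @` setT.

Lemma cf_res_rcons a c x :
  cf_res (rcons a c) x = (c%:R * (cf_res a x).1 + (cf_res a x).2, (cf_res a x).1).
Proof.
rewrite /cf_res cf_pq_rcons; case: cf_pq => [[[p p'] q] q'] /=.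
by rewrite !natrD !natrM; congr pair; ring.
Qed.

Lemma JcylE a x : positive_seq a -> Jcyl a x <-> cyl_form (cf_res a x) < 0.
Proof.
move/cf_q_gt0; rewrite /Jcyl /cf_res /cyl_form.
case: cf_pq => [[[p p'] q] q'] /= q0; rewrite minmax_mul_lt0.
have qR : (0 : R) < q%:R by rewrite ltr0n.
have qqR : (0 : R) < (q + q')%:R by rewrite ltr0n addn_gt0 q0.
have -> : (p%:R / q%:R - x) * ((p + p')%:R / (q + q')%:R - x) =
   ((x * q%:R - p%:R) * ((x * q%:R - p%:R) + (x * q'%:R - p'%:R)))
   / (q%:R * (q + q')%:R) :> R.
  by rewrite !natrD; field; rewrite -natrD !gt_eqF.
by rewrite pmulr_llt0 // invr_gt0 mulr_gt0.
Qed.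

Lemma Jcyl_nil x : Jcyl [::] x <-> 0 < x < 1.
Proof. by rewrite /Jcyl /= mul0r add0n addn0 divr1 min_l ?max_r ?ler01. Qed.

Lemma Jcyl_rcons_sub a c :
  positive_seq (rcons a c) -> @Jcyl R (rcons a c) `<=` @Jcyl R a.
Proof.
move=> pac x; have := pac; rewrite /positive_seq all_rcons => /andP[c1 pa].
rewrite (JcylE _ pac) (JcylE _ pa) cf_res_rcons; exact: cyl_form_step_lt0.
Qed.

Lemma Jcyl_sub_itv01 a : positive_seq a -> @Jcyl R a `<=` [set x | 0 < x < 1].
Proof.
elim/last_ind: a => [_ x /Jcyl_nil //|a c IH pac x /(Jcyl_rcons_sub pac)].
by apply: IH; move: pac; rewrite /positive_seq all_rcons => /andP[].
Qed.

Lemma Jcyl_same_rank_eq a b y : size a = size b ->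
  positive_seq a -> positive_seq b -> Jcyl a y -> Jcyl b y -> a = b.
Proof.
elim/last_ind: a b => [|a c IH] b; first by case: b.
case/lastP: b => [|b d]; first by rewrite size_rcons.
rewrite !size_rcons => -[sz] pac pbd ya yb; have := pac; have := pbd.
rewrite /positive_seq !all_rcons => /andP[_ pb] /andP[_ pa].
have ab : a = b.
  by apply: IH => //; [exact: Jcyl_rcons_sub ya | exact: Jcyl_rcons_sub yb].
subst b; move: ya yb; rewrite (JcylE _ pac) (JcylE _ pbd) !cf_res_rcons => ya yb.
by rewrite (cyl_form_step_inj ya yb).
Qed.

Lemma cf_res_fst_neq0 a x : positive_seq a -> ~ nat_fracs x -> (cf_res a x).1 != 0.
Proof.
move/cf_q_gt0; rewrite /cf_res; case: cf_pq => [[[p p'] q] q'] /= q0 nfx.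
apply/eqP => /eqP; rewrite subr_eq0 => /eqP xq; apply: nfx.
by exists (p, q) => //=; rewrite -xq mulfK // pnatr_eq0 -lt0n.
Qed.

Lemma Jcyl_exists x n : ~ nat_fracs x -> 0 < x < 1 ->
  exists a, [/\ size a = n, positive_seq a & Jcyl a x].
Proof.
move=> nfx x01; elim: n => [|n [a [sz pa xa]]].
  by exists [::]; split => //; apply/Jcyl_nil.
have nz c : (1 <= c)%N -> c%:R * (cf_res a x).1 + (cf_res a x).2 != 0.
  move=> c1; have pac : positive_seq (rcons a c) by rewrite /positive_seq all_rcons c1.
  by have := cf_res_fst_neq0 pac nfx; rewrite cf_res_rcons.
move: xa; rewrite (JcylE _ pa) => xa.
have [c c1 xc] := cyl_form_step_exists xa nz.
have pac : positive_seq (rcons a c) by rewrite /positive_seq all_rcons c1.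
by exists (rcons a c); split; rewrite ?size_rcons ?sz // (JcylE _ pac) cf_res_rcons.
Qed.

Lemma open_Jcyl a : open (@Jcyl R a).
Proof.
rewrite /Jcyl; case: cf_pq => [[[p p'] q] q'].
set e1 := Num.min _ _; set e2 := Num.max _ _.
have -> : [set x : R | e1 < x < e2] = [set x | e1 < x] `&` [set x | x < e2].
  by rewrite predeqE => r; split => [/andP[? ?] //|[/= -> ->]].
by apply: openI; [exact: open_gt | exact: open_lt].
Qed.

Lemma countable_nat_fracs : countable nat_fracs.
Proof. exact: sub_countable (card_image_le _ _) (countableP _). Qed.

Section UnionOfCylinders.
Variables (I : set (seq nat)) (n : nat).
Hypothesis rankI : forall a, I a -> size a = n /\ positive_seq a.

Let S := \bigcup_(a in I) @Jcyl R a.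

Lemma closure_bigcup_Jcyl_sub : closure S `<=` S `|` nat_fracs.
Proof.
move=> x Sx; case: (pselect (nat_fracs x)) => [|nfx]; [by right | left].
have x01 : 0 <= x <= 1.
  have cl01 : closed [set y : R | 0 <= y <= 1].
    rewrite (_ : [set _ | _] = [set y | 0 <= y] `&` [set y | y <= 1]).
      by apply: closedI; [exact: closed_ge | exact: closed_le].
    by rewrite predeqE => y; split => [/andP[]|[/= -> ->]].
  have sub01 : S `<=` [set y : R | 0 <= y <= 1].
    move=> y [a /rankI[_ pa]].
    by move/(Jcyl_sub_itv01 pa) => /andP[? ?]; apply/andP; split; exact: ltW.
  by have := closureS sub01 Sx; rewrite -((closure_id _).1 cl01).
have {}x01 : 0 < x < 1.
  case/andP: x01 => x0 x1; rewrite !lt_neqAle x0 x1 !andbT.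
  apply/andP; split; apply/eqP => ex; apply: nfx.
    by exists (0, 1)%N => //=; rewrite mul0r.
  by exists (1, 1)%N => //=; rewrite divr1.
have [a [sz pa xa]] := Jcyl_exists n nfx x01.
have [y [[b Ib yb] ya]] := Sx _ (open_nbhs_nbhs (conj (open_Jcyl (a:=a)) xa)).
have [szb pb] := rankI Ib.
by exists a => //; rewrite (Jcyl_same_rank_eq _ pa pb ya yb) // sz szb.
Qed.

Lemma lebesgue_closure_bigcup_Jcyl :
  lebesgue_measure (closure S) = lebesgue_measure S.
Proof.
have mS : measurable S.
  by apply: open_measurable; apply: bigcup_open => a _; exact: open_Jcyl.
have mN : measurable nat_fracs.
  by apply: countable_measurable; [exact: measurable_set1 | exact: countable_nat_fracs].
have mC : measurable (closure S) by apply: closed_measurable; exact: closed_closure.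
apply/eqP; rewrite eq_le; apply/andP; split; last first.
  by apply: le_measure; rewrite ?inE //; exact: subset_closure.
have N0 : lebesgue_measure nat_fracs = 0%E.
  exact: countable_lebesgue_measure0 countable_nat_fracs.
rewrite -(measureU0 (mu := @lebesgue_measure R) mS mN N0).
have mSN : measurable (S `|` nat_fracs) by exact: measurableU.
by apply: le_measure; rewrite ?inE //; exact: closure_bigcup_Jcyl_sub.
Qed.
End UnionOfCylinders.
End Cylinders.

Theorem lemma4 (R : realType) (phi : nat -> R) (m k : nat) (A : R)
  (phi_mono : forall i j : nat, (0 < i)%N -> (i <= j)%N -> phi i <= phi j)
  (phi_gt1 : forall i : nat, (0 < i)%N -> 1 < phi i)
  (m_pos : (0 < m)%N) (k_pos : (0 < k)%N)
  (A_pos : 0 < A) (hA : 0 < A - ln A - ln 2 - 1) :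
  (@lebesgue_measure R) (@closure R (F0 phi m k)) = (@lebesgue_measure R) (F0 phi m k) /\
  (@lebesgue_measure R) (@closure R (G0 A k)) = (@lebesgue_measure R) (G0 A k).
Proof.
(* Only the rank of the cylinders matters. *)
split.
- by apply: (@lebesgue_closure_bigcup_Jcyl R _ (m + k)%N) => a [? [? _]].
- by apply: (@lebesgue_closure_bigcup_Jcyl R _ k) => a [? [? _]].
Qed.
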